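(* In the setting of the context, for each white vertex $v\in\mathcal{V}_L^W$ define $$a_{v,\sigma}=\sum_{u\in R(v)}\Big(\sum_{j=1}^{N(v\to u)}(-1)^{|(v\to u)_j|-1}\Big)c_{u,\sigma},$$ where $(v\to u)_1,\dots,(v\to u)_{N(v\to u)}$ are the distinct directed paths from $v$ to $u$ and $|(v\to u)_j|$ is the number of vertices on the path. Then $\{a_{v,\sigma}^\dagger,b_{l,\sigma}\}=0$ for all $v\in\mathcal{V}_L^W$ and all $l=1,\dots,L$, $\{c^\dagger_{u,\sigma},a_{v,\sigma}\}=\delta_{u,v}$ for $u,v\in\mathcal{V}_L^W$, and the single-electron states $a^\dagger_{v,\sigma}\Phi_0$, $v\in\mathcal{V}_L^W$, form a basis of the zero-energy eigenspace of $H_{\mathrm{hop}}$ in the single-electron, spin-$\sigma$ sector; in particular $|\mathcal{V}_L^W|=|\mathcal{V}_L|-L$.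
   Context: Construction. Let $G_l=(V_l,E_l)$, $l=1,\dots,L$, be complete graphs with $|V_l|\ge 2$. In each $V_l$ one vertex $v_l^0$ is painted black, the others white. Set $\mathcal{G}_1=G_1$. For $l=2,\dots,L$: choose an integer $z_l$ with $0<z_l\le |V_l|-1$, choose $z_l$ white vertices of $V_l$ and identify each with a vertex (black or white; distinct with distinct) of $\mathcal{V}_{l-1}$; $\mathcal{V}_l=\mathcal{V}_{l-1}\cup V_l$ with these identifications and $\mathcal{E}_l=\mathcal{E}_{l-1}\cup E_l$ (edges joining the same two vertices merged). A white vertex identified with a black one becomes black; two identified white vertices stay white; $v_l^0$ is never identified with an earlier vertex. The black vertices of $\mathcal{G}_L$ are exactly $v_1^0,\dots,v_L^0$; $\mathcal{V}_L^W$ denotes the set of white vertices; $V_l$ is regarded as a subset of $\mathcal{V}_L$. Directed graph: the directed edge set is $\vec{\mathcal{E}}_L=\bigcup_{l=1}^L\{(v,v_l^0): v\in V_l\setminus\{v_l^0\}\}$ (with the identifications above). A directed path from $v$ to $u$ is a sequence $(v_0,\dots,v_k)$ with $v_0=v$, $v_k=u$, $(v_{j-1},v_j)\in\vec{\mathcal{E}}_L$; the trivial sequence $(v)$ counts as a path from $v$ to $v$. For $v\in\mathcal{V}_L^W$, $R(v)$ is the set of vertices reachable from $v$ by directed paths (including $v$) and $N(v\to u)$ is the number of directed paths from $v$ to $u$. Fermions $c_{v,\sigma}$ on $\mathcal{V}_L$ satisfy the canonical anticommutation relations; $\Phi_0$ is the vacuum; $b_{l,\sigma}=\sum_{v\in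 V_l}c_{v,\sigma}$; $H_{\mathrm{hop}}=t\sum_{l=1}^L\sum_\sigma b_{l,\sigma}^\dagger b_{l,\sigma}$ with $t>0$. *)

From mathcomp Require Import all_boot all_order all_algebra.
Import Order.TTheory GRing.Theory Num.Theory.
Set Implicit Arguments.
Unset Strict Implicit.
Unset Printing Implicit Defensive.
Local Open Scope ring_scope.

(* The final vertex set V_L is a finite type V.  Clique l (0-based, l : 'I_L,
   corresponding to the paper's l+1) has vertex set Vl l (a subset of V after
   identifications) and black vertex bl l. *)
Definition glued_cliques (V : finType) (L : nat)
    (Vl : 'I_L -> {set V}) (bl : 'I_L -> V) : Prop :=
  [/\ (0 < L)%N,
      (forall l, (2 <= #|Vl l|)%N /\ bl l \in Vl l),
      (forall v, exists l, v \in Vl l),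
      (* v_l^0 is never identified with an earlier vertex *)
      (forall l k : 'I_L, (k < l)%N -> bl l \notin Vl k) &
      (* z_l > 0 : V_l shares at least one vertex with V_{l-1} = U_{k<l} V_k *)
      (forall l : 'I_L, (0 < l)%N ->
          exists2 k : 'I_L, (k < l)%N & Vl l :&: Vl k != set0)].

Definition white (V : finType) (L : nat) (bl : 'I_L -> V) : {set V} :=
  [set v | [forall l, v != bl l]].

Definition dedge (V : finType) (L : nat) (Vl : 'I_L -> {set V})
    (bl : 'I_L -> V) : rel V :=
  fun v w => [exists l, [&& w == bl l, v \in Vl l & v != bl l]].

Definition reach (V : finType) (L : nat) (Vl : 'I_L -> {set V}) (bl : 'I_L -> V) (v : V) : {set V} :=
  [set u | connect (@dedge V L Vl bl) v u].

(* sum over directed paths (v = v_0, s_1, ..., s_k = u) of (-1)^(#vertices - 1);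
   the path is v :: s with s a k-tuple.  The digraph is acyclic (edges strictly
   increase the black index), so every directed path has < #|V| edges. *)
Definition pathcoef (V : finType) (L : nat) (Vl : 'I_L -> {set V}) (bl : 'I_L -> V) (v u : V) : int :=
  \sum_(k < #|V|)
     \sum_(s : k.-tuple V | path (@dedge V L Vl bl) v s && (last v s == u))
        (-1) ^+ k.

(* modes (vertex, spin); Fock space = functions on occupation sets *)
Notation fock C V := {ffun {set (V * bool)} -> C^o}.

Definition jwsign (C : numClosedFieldType) (V : finType)
    (x : V * bool) (S : {set V * bool}) : C :=
  (-1) ^+ #|[set y in S | (enum_rank y < enum_rank x)%N]|.

Definition cann (C : numClosedFieldType) (V : finType) (x : V * bool) (psi : fock C V) : fock C V :=
  [ffun S : {set V * bool} => if x \in S then 0 else @jwsign C V x S * psi (x |: S)].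

Definition ccre (C : numClosedFieldType) (V : finType) (x : V * bool) (psi : fock C V) : fock C V :=
  [ffun S : {set V * bool} => if x \in S then @jwsign C V x (S :\ x) * psi (S :\ x) else 0].

Definition vac (C : numClosedFieldType) (V : finType) : fock C V := [ffun S : {set V * bool} => (S == set0)%:R].

Definition bann (C : numClosedFieldType) (V : finType) (L : nat) (Vl : 'I_L -> {set V}) (l : 'I_L) (s : bool)
    (psi : fock C V) : fock C V :=
  \sum_(v in Vl l) @cann C V (v, s) psi.

Definition bcre (C : numClosedFieldType) (V : finType) (L : nat) (Vl : 'I_L -> {set V}) (l : 'I_L) (s : bool)
    (psi : fock C V) : fock C V :=
  \sum_(v in Vl l) @ccre C V (v, s) psi.

Definition aann (C : numClosedFieldType) (V : finType) (L : nat) (Vl : 'I_L -> {set V}) (bl : 'I_L -> V) (v : V) (s : bool) (psi : fock C V) : fock C V :=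
  \sum_(u in @reach V L Vl bl v)
     ((@pathcoef V L Vl bl v u)%:~R : C) *: @cann C V (u, s) psi.

Definition acre (C : numClosedFieldType) (V : finType) (L : nat) (Vl : 'I_L -> {set V}) (bl : 'I_L -> V) (v : V) (s : bool) (psi : fock C V) : fock C V :=
  \sum_(u in @reach V L Vl bl v)
     (((@pathcoef V L Vl bl v u)%:~R : C)^*) *: @ccre C V (u, s) psi.

Definition hop (C : numClosedFieldType) (V : finType) (L : nat) (Vl : 'I_L -> {set V}) (t : C) (psi : fock C V) : fock C V :=
  t *: \sum_(l < L) \sum_(s : bool) @bcre C V L Vl l s (@bann C V L Vl l s psi).

Definition anticomm (C : numClosedFieldType) (V : finType) (A B : fock C V -> fock C V) (psi : fock C V) : fock C V :=
  A (B psi) + B (A psi).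

Definition single_sector (C : numClosedFieldType) (V : finType) (s : bool) (psi : fock C V) : Prop :=
  forall S, psi S != 0 -> exists u, S = [set (u, s)].

From mathcomp Require Import all_boot all_order all_algebra ring zify.
Import Order.TTheory GRing.Theory Num.Theory.
Local Open Scope ring_scope.
Set Implicit Arguments.
Unset Strict Implicit.

(* Walks in the digraph are counted by signed_walks, whose
      recursion on the last edge gives
        pathcoef v u = delta_{v,u} - sum over edges w -> u of pathcoef v w,
      because the gluing order makes the digraph acyclic (black vertices get increasing
      heights).  Consequently pathcoef is the identity on white vertices and sums to
      zero over every clique V_l, the edges into v_l^0 being exactly V_l \ {v_l^0}.
   3. Zero modes.  The anticommutators reduce to these two facts.  H_hop annihilates a
      one-electron state iff all its clique sums vanish (argued downwards from the last
      clique), and such a state is recovered from its white amplitudes through pathcoef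
      (induction on height); this gives independence and spanning of a_{v,s}^dagger Phi_0.
   The count #|white| = #|V| - L holds since l |-> v_l^0 is injective. *)

Lemma sign_sq (R : comPzRingType) (n : nat) : ((-1) ^+ n * (-1) ^+ n : R) = 1.
Proof. by rewrite -exprMn mulrNN mulr1 expr1n. Qed.

Lemma setD1_eq0 (T : finType) (x : T) (S : {set T}) :
  x \in S -> (S :\ x == set0) = (S == [set x]).
Proof.
move=> xS; rewrite setD_eq0 subset1 orbC.
by case: (S =P set0) => [S0|//]; rewrite S0 inE in xS.
Qed.

Section Fock.
Variables (C : numClosedFieldType) (V : finType).
Implicit Types (x y : V * bool) (S : {set V * bool}) (psi : fock C V).

Lemma jwsign_setU1 x y S : y \notin S ->
  jwsign C x (y |: S) = (-1) ^+ (enum_rank y < enum_rank x)%N * jwsign C x S.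
Proof.
move=> yS; rewrite /jwsign -exprD; congr (_ ^+ _).
case lt_yx: (enum_rank y < enum_rank x)%N.
  have -> : [set z in y |: S | (enum_rank z < enum_rank x)%N] =
            y |: [set z in S | (enum_rank z < enum_rank x)%N].
    by apply/setP => z; rewrite !inE; case: eqP => [->|_] //=; rewrite lt_yx.
  by rewrite cardsU1 inE (negbTE yS).
suff -> : [set z in y |: S | (enum_rank z < enum_rank x)%N] =
          [set z in S | (enum_rank z < enum_rank x)%N] by [].
apply/setP => z; rewrite !inE.
by case: eqP => [->|_] //=; rewrite lt_yx (negbTE yS).
Qed.

Lemma jwsign_set0 x : jwsign C x set0 = 1.
Proof.
rewrite /jwsign (_ : [set z in set0 | _] = set0) ?cards0 //.
by apply/setP => z; rewrite !inE.
Qed.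

Lemma ccre_cann_anticomm x y psi :
  ccre x (cann y psi) + cann y (ccre x psi) = (x == y)%:R *: psi.
Proof.
apply/ffunP => S; rewrite !ffunE.
have [<-|nxy] := eqP.
  rewrite scale1r; case xS: (x \in S).
    by rewrite !inE eqxx /= mulrA sign_sq mul1r addr0 setD1K.
  rewrite setU11 /= add0r mulrA setU1K ?xS //.
  by rewrite sign_sq mul1r.
rewrite scale0r.
have [nxy1 nyx1] : (x == y) = false /\ (y == x) = false.
  by split; apply/eqP => // eyx; case: nxy.
case xS: (x \in S); case yS: (y \in S);
  rewrite ?ffunE ?inE ?yS ?xS ?andbF ?andbT ?nxy1 ?nyx1 //= ?mulr0 ?addr0 ?add0r //.
(* The only nontrivial case: x occupied, y empty; the two orders differ by one swap. *)
have -> : (y |: S) :\ x = y |: (S :\ x).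
  by apply/setP => z; rewrite !inE; case: eqP => // ->; rewrite nxy1.
have -> : jwsign C y S = (-1) ^+ (enum_rank x < enum_rank y)%N * jwsign C y (S :\ x).
  by rewrite -jwsign_setU1 ?setD11 // setD1K.
rewrite jwsign_setU1 ?inE ?eqxx ?yS ?andbF //.
have ne_rk : enum_rank x != enum_rank y by rewrite (inj_eq enum_rank_inj) nxy1.
case: (ltngtP (enum_rank x) (enum_rank y)) => [_|_|/ord_inj eq_rk];
  last by rewrite eq_rk eqxx in ne_rk.
all: rewrite /= ?expr1 ?expr0; ring.
Qed.

Lemma cannD x : {morph @cann C V x : p q / p + q}.
Proof. by move=> p q; apply/ffunP => S; rewrite !ffunE; case: ifP; rewrite ?addr0 ?mulrDr. Qed.

Lemma cannZ x (a : C) psi : cann x (a *: psi) = a *: cann x psi.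
Proof. by apply/ffunP => S; rewrite !ffunE; case: ifP; rewrite ?scaler0 // scalerAr. Qed.

Lemma ccreD x : {morph @ccre C V x : p q / p + q}.
Proof. by move=> p q; apply/ffunP => S; rewrite !ffunE; case: ifP; rewrite ?addr0 ?mulrDr. Qed.

Lemma ccreZ x (a : C) psi : ccre x (a *: psi) = a *: ccre x psi.
Proof. by apply/ffunP => S; rewrite !ffunE; case: ifP; rewrite ?scaler0 // scalerAr. Qed.

Lemma cann0 x : cann x (0 : fock C V) = 0.
Proof. by have := cannZ x 0 0; rewrite !scale0r. Qed.

Lemma ccre0 x : ccre x (0 : fock C V) = 0.
Proof. by have := ccreZ x 0 0; rewrite !scale0r. Qed.

Lemma cann_sum x (I : Type) (r : seq I) (P : pred I) (F : I -> fock C V) :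
  cann x (\sum_(i <- r | P i) F i) = \sum_(i <- r | P i) cann x (F i).
Proof. exact: (big_morph _ (cannD x) (cann0 x)). Qed.

Lemma ccre_sum x (I : Type) (r : seq I) (P : pred I) (F : I -> fock C V) :
  ccre x (\sum_(i <- r | P i) F i) = \sum_(i <- r | P i) ccre x (F i).
Proof. exact: (big_morph _ (ccreD x) (ccre0 x)). Qed.

Lemma cann_vac x : cann x (vac C V) = 0.
Proof.
apply/ffunP => S; rewrite !ffunE; case: ifP => // _.
by rewrite (_ : (x |: S == set0) = false) ?mulr0 //; apply/negbTE/set0Pn; exists x; rewrite setU11.
Qed.

Lemma ccre_vacE x S : ccre x (vac C V) S = (S == [set x])%:R.
Proof.
rewrite !ffunE; case: ifP => xS; last by case: eqP => // E; rewrite E set11 in xS.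
rewrite -(setD1_eq0 xS); case: eqP => [->|_]; last by rewrite mulr0.
by rewrite jwsign_set0 mulr1.
Qed.

Lemma cann_onepart x y : cann y (ccre x (vac C V)) = (x == y)%:R *: vac C V.
Proof. by rewrite -ccre_cann_anticomm cann_vac ccre0 add0r. Qed.

Lemma onepart_combE s (k : V -> C) S :
  (\sum_u k u *: ccre (u, s) (vac C V)) S = \sum_u k u * (S == [set (u, s)])%:R.
Proof. by rewrite sum_ffunE; apply: eq_bigr => u _; rewrite ffunE ccre_vacE. Qed.

Lemma onepart_comb_at s (k : V -> C) w :
  (\sum_u k u *: ccre (u, s) (vac C V)) [set (w, s)] = k w.
Proof.
rewrite onepart_combE (bigD1 w) //= eqxx mulr1 big1 ?addr0 // => u ne.
by rewrite (inj_eq set1_inj) xpair_eqE eqxx andbT eq_sym (negbTE ne) mulr0.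
Qed.

Lemma onepart_comb_sector s (k : V -> C) :
  single_sector s (\sum_u k u *: ccre (u, s) (vac C V)).
Proof.
move=> S; rewrite onepart_combE => nz.
case: (pickP (fun u => S == [set (u, s)])) => [u /eqP E|none]; first by exists u.
by case/eqP: nz; apply: big1 => u _; rewrite none mulr0.
Qed.

Lemma sector_decomp s psi :
  single_sector s psi -> psi = \sum_u psi [set (u, s)] *: ccre (u, s) (vac C V).
Proof.
move=> sec; apply/ffunP => S.
case: (pickP (fun u => S == [set (u, s)])) => [u /eqP ->|none].
  by rewrite onepart_comb_at.
rewrite onepart_combE big1 => [|u _]; last by rewrite none mulr0.
apply/eqP; apply: contraT => nz; case: (sec S nz) => u E.
by have := none u; rewrite E eqxx.
Qed.

Lemma sum_onepart_at s (A : {set V}) w :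
  (\sum_(u in A) ccre (u, s) (vac C V)) [set (w, s)] = (w \in A)%:R.
Proof.
rewrite sum_ffunE; under eq_bigr do rewrite ccre_vacE (inj_eq set1_inj) xpair_eqE eqxx andbT.
case: (boolP (w \in A)) => hw.
  rewrite (bigD1 w) //= eqxx big1 ?addr0 // => u /andP [_ ne].
  by rewrite eq_sym (negbTE ne).
by rewrite big1 // => u hu; case: eqP => // E; rewrite E hu in hw.
Qed.

End Fock.

Section SignedWalks.
Variables (V : finType) (e : rel V).

(* Signed number of directed walks v -> u with exactly k edges, each counted with
   (-1)^k; [pathcoef] is the sum of these over k < #|V|. *)
Definition signed_walks (v : V) (k : nat) (u : V) : int :=
  \sum_(s : k.-tuple V | path e v s && (last v s == u)) (-1) ^+ k.

Lemma signed_walks0 v u : signed_walks v 0 u = (v == u)%:R.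
Proof.
rewrite /signed_walks (eq_bigl (fun _ => v == u)) => [|s]; last by rewrite (tuple0 s).
case: eqP => _; last by rewrite big_pred0.
by rewrite sumr_const card_tuple expn0 expr0.
Qed.

(* A walk with k+1 edges is a walk with k edges followed by one last edge w -> u. *)
Lemma signed_walksS v k u :
  signed_walks v k.+1 u = - \sum_(w | e w u) signed_walks v k w.
Proof.
rewrite /signed_walks.
pose snoc (p : k.-tuple V * V) : k.+1.-tuple V := [tuple of rcons p.1 p.2].
pose unsnoc (t : k.+1.-tuple V) : k.-tuple V * V :=
  ([tuple of belast (thead t) (behead t)], last (thead t) (behead t)).
have snocK : cancel snoc unsnoc.
  case=> s x; rewrite /unsnoc /snoc /=.
  have := lastI (thead [tuple of rcons s x]) (behead [tuple of rcons s x]).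
  rewrite -[_ :: _]/(tval [tuple of thead _ :: behead _]) -tuple_eta /=.
  by case/rcons_inj => E1 E2; congr pair; [apply: val_inj; rewrite /= -E1 | rewrite -E2].
have unsnocK : cancel unsnoc snoc.
  move=> t; apply: val_inj; rewrite /snoc /unsnoc /= -lastI.
  exact: (esym (congr1 val (tuple_eta t))).
rewrite (@reindex int +%R 0 _ _ snoc) /=; last by exists unsnoc => ? _.
transitivity (\sum_(s : k.-tuple V | path e v s)
                \sum_(x | e (last v s) x && (x == u)) ((-1) ^+ k.+1 : int)).
  rewrite pair_big_dep /=; apply: eq_bigl; case=> s x /=.
  by rewrite rcons_path last_rcons andbA.
rewrite -sumrN [RHS](eq_bigr (fun w => \sum_(s : k.-tuple V | path e v s && (last v s == w))
                                        - ((-1) ^+ k : int))); last by move=> w _; rewrite sumrN.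
rewrite [RHS](exchange_big_dep (fun s : k.-tuple V => path e v s)) /=; last by move=> w s _ /andP[].
apply: eq_bigr => s ps.
case E: (e (last v s) u); last first.
  rewrite !big_pred0 ?oppr0 // => [w|x]; last by case: eqP => [->|]; rewrite ?E ?andbF.
  by case: eqP => [<-|]; rewrite ?E ?andbF ?andbT.
rewrite (big_pred1 u) => [|x /=]; last first.
  by rewrite -[RHS]/(x == u); case: eqP => [->|]; rewrite ?E ?andbF.
rewrite (big_pred1 (last v s)) => [|w /=]; first by rewrite exprS mulN1r.
by rewrite -[RHS]/(w == last v s) [last v s == w]eq_sym; case: eqP => [->|]; rewrite ?E ?ps ?andbF.
Qed.

End SignedWalks.

Section GluedCliques.
Variables (V : finType) (L : nat) (Vl : 'I_L -> {set V}) (bl : 'I_L -> V).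
Hypothesis glued : glued_cliques Vl bl.

Lemma black_in_clique l : bl l \in Vl l.
Proof. by case: glued => _ hb _ _ _; case: (hb l). Qed.

Lemma black_before m l : bl m \in Vl l -> (m <= l)%N.
Proof.
case: glued => _ _ _ fresh _ hm; rewrite leqNgt; apply/negP => lt_lm.
by have := fresh m l lt_lm; rewrite hm.
Qed.

Lemma black_inj : injective bl.
Proof.
move=> i j E; apply: ord_inj; apply/eqP; rewrite eqn_leq.
by rewrite black_before ?E ?black_in_clique // black_before -?E ?black_in_clique.
Qed.

Lemma dedge_to_black w l : dedge Vl bl w (bl l) = (w \in Vl l) && (w != bl l).
Proof.
apply/existsP/andP => [[l' /and3P [/eqP E hw hne]]|[hw hne]].
  by rewrite (black_inj E).
by exists l; rewrite eqxx hw hne.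
Qed.

Lemma dedge_to_white w u : u \in white bl -> dedge Vl bl w u = false.
Proof.
rewrite inE => /forallP hu; apply/existsP => [[l /and3P [E _ _]]].
by have := hu l; rewrite E.
Qed.

Lemma nonwhite_black u : u \notin white bl -> exists l, u = bl l.
Proof. by rewrite inE negb_forall => /existsP [l /negPn/eqP ->]; exists l. Qed.

(* Every vertex is white or black, and black vertices are in bijection with cliques. *)
Lemma white_card : #|white bl| = (#|V| - L)%N.
Proof.
have -> : white bl = ~: [set bl l | l in 'I_L].
  apply/setP => u; rewrite inE in_setC; apply/forallP/negP.
    by move=> h /imsetP [l _ E]; have := h l; rewrite E eqxx.
  by move=> h l; apply/eqP => E; apply: h; apply/imsetP; exists l.
by rewrite -(cardsC [set bl l | l in 'I_L]) card_imset ?card_ord ?addKn //; exact: black_inj.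
Qed.

(* The height of a vertex: 0 for white vertices, l+1 for the black vertex of clique l.
   Directed edges strictly increase the height, so the digraph is acyclic. *)
Definition height (u : V) : nat := \max_(l : 'I_L | u == bl l) l.+1.

Lemma height_white u : u \in white bl -> height u = 0%N.
Proof. by rewrite inE => /forallP hu; rewrite /height big_pred0 // => l; exact: negbTE. Qed.

Lemma height_black l : height (bl l) = l.+1.
Proof.
rewrite /height (big_pred1 l) // => m /=; rewrite eq_sym.
by apply/eqP/eqP => [/black_inj|->].
Qed.

Lemma height_le u : (height u <= L)%N.
Proof.
case: (boolP (u \in white bl)) => [/height_white -> //|/nonwhite_black [l ->]].
by rewrite height_black.
Qed.

Lemma dedge_height w u : dedge Vl bl w u -> (height w < height u)%N.
Proof.
case/existsP => l /and3P [/eqP -> hw hne]; rewrite height_black.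
case: (boolP (w \in white bl)) => [/height_white -> //|/nonwhite_black [m E]].
rewrite E height_black ltnS ltn_neqAle black_before -?E // andbT.
by apply: contra hne => /eqP /ord_inj E'; rewrite E E'.
Qed.

Lemma path_height v s :
  path (dedge Vl bl) v s -> (height v + size s <= height (last v s))%N.
Proof.
elim: s v => [|x s IH] v /=; first by rewrite addn0.
by case/andP => /dedge_height hvx /IH; lia.
Qed.

(* The path coefficients satisfy the recursion
   pathcoef v u = delta_{v,u} - sum over directed edges w -> u of pathcoef v w:
   the walks of length #|V| - 1 that would escape the truncation do not exist. *)
Lemma pathcoef_rec v u : v \in white bl ->
  pathcoef Vl bl v u = (v == u)%:R - \sum_(w | dedge Vl bl w u) pathcoef Vl bl v w.
Proof.
move=> vw.
have L_lt : (L < #|V|)%N.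
  have : (0 < #|white bl|)%N by apply/card_gt0P; exists v.
  by rewrite white_card; lia.
have pathcoefE x : pathcoef Vl bl v x = \sum_(k < #|V|) signed_walks (dedge Vl bl) v k x by [].
rewrite pathcoefE; move: L_lt; case E: #|V| => [//|n] L_lt.
rewrite big_ord_recl signed_walks0.
under eq_bigr do rewrite /bump /= signed_walksS.
rewrite sumrN exchange_big /=; congr (_ - _); apply: eq_bigr => w hwu.
rewrite pathcoefE E big_ord_recr /= [X in _ + X]big1 ?addr0 // => s /andP [ps /eqP ls].
have := path_height (s := rcons s u) (v := v).
rewrite rcons_path ps ls hwu last_rcons size_rcons size_tuple => /(_ isT).
by have := height_le u; lia.
Qed.

Lemma pathcoef_white v u : v \in white bl -> u \in white bl ->
  pathcoef Vl bl v u = (v == u)%:R.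
Proof.
move=> vw uw; rewrite pathcoef_rec // big_pred0 ?subr0 // => w.
exact: dedge_to_white.
Qed.

Lemma pathcoef_black v l : v \in white bl ->
  pathcoef Vl bl v (bl l) = - \sum_(w in Vl l | w != bl l) pathcoef Vl bl v w.
Proof.
move=> vw; rewrite pathcoef_rec //.
have -> : (v == bl l) = false by apply/negbTE; move: vw; rewrite inE => /forallP.
by rewrite sub0r; congr (- _); apply: eq_bigl => w; rewrite dedge_to_black.
Qed.

Lemma pathcoef_clique v l : v \in white bl -> \sum_(w in Vl l) pathcoef Vl bl v w = 0.
Proof.
by move=> vw; rewrite (bigD1 (bl l)) ?black_in_clique //= pathcoef_black // addNr.
Qed.

Lemma pathcoef_unreachable v u : u \notin reach Vl bl v -> pathcoef Vl bl v u = 0.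
Proof.
move=> hu; apply: big1 => k _; apply: big1 => s /andP [ps /eqP ls].
by case/negP: hu; rewrite inE; apply/connectP; exists s.
Qed.

End GluedCliques.

Section Hopping.
Variables (C : numClosedFieldType) (V : finType) (L : nat) (Vl : 'I_L -> {set V}).

Lemma bann_onepart l s s' (k : V -> C) :
  bann Vl l s' (\sum_u k u *: ccre (u, s) (vac C V)) =
  ((s' == s)%:R * \sum_(u in Vl l) k u) *: vac C V.
Proof.
rewrite /bann.
under eq_bigr do rewrite cann_sum.
under eq_bigr do under eq_bigr do rewrite cannZ cann_onepart scalerA.
under eq_bigr do rewrite -scaler_suml.
rewrite -scaler_suml; congr (_ *: _).
rewrite exchange_big /= big_distrr /= [RHS]big_mkcond /=; apply: eq_bigr => u _.
case: (boolP (u \in Vl l)) => hu.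
  rewrite (bigD1 u) //= big1 ?addr0.
    by rewrite xpair_eqE eqxx /= eq_sym; case: eqP; rewrite ?mulr1 ?mul1r ?mulr0 ?mul0r.
  by move=> w /andP [_ ne]; rewrite xpair_eqE eq_sym (negbTE ne) mulr0.
rewrite big1 ?mulr0 // => w hw.
rewrite (_ : (u, s) == (w, s') = false) ?mulr0 //.
by rewrite xpair_eqE; apply/negbTE; apply: contraNN hu => /andP [/eqP -> _].
Qed.

Lemma bcreZ l s (a : C) (psi : fock C V) : bcre Vl l s (a *: psi) = a *: bcre Vl l s psi.
Proof. by rewrite /bcre scaler_sumr; apply: eq_bigr => w _; rewrite ccreZ. Qed.

Lemma hop_onepart t s (k : V -> C) :
  hop Vl t (\sum_u k u *: ccre (u, s) (vac C V)) =
  t *: \sum_(l < L) (\sum_(u in Vl l) k u) *: \sum_(w in Vl l) ccre (w, s) (vac C V).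
Proof.
rewrite /hop; congr (t *: _); apply: eq_bigr => l _.
rewrite (bigD1 s) //= [X in _ + X]big1 ?addr0 => [|s' ne].
  by rewrite bann_onepart bcreZ eqxx mul1r.
by rewrite bann_onepart bcreZ (negbTE ne) mul0r scale0r.
Qed.

Lemma hop_onepart_at t s (k : V -> C) w :
  hop Vl t (\sum_u k u *: ccre (u, s) (vac C V)) [set (w, s)] =
  t * \sum_(l | w \in Vl l) \sum_(u in Vl l) k u.
Proof.
rewrite hop_onepart ffunE sum_ffunE; congr (_ * _).
rewrite [RHS]big_mkcond; apply: eq_bigr => l _; rewrite ffunE sum_onepart_at.
by case: (w \in Vl l); [exact: mulr1 | exact: mulr0].
Qed.

End Hopping.

Section ZeroModes.
Variables (C : numClosedFieldType) (V : finType) (L : nat).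
Variables (Vl : 'I_L -> {set V}) (bl : 'I_L -> V).
Hypothesis glued : glued_cliques Vl bl.

Local Notation coef v u := ((pathcoef Vl bl v u)%:~R : C).

(* The sums defining a_{v,s} and a_{v,s}^dagger may run over all vertices, since
   coefficients of unreachable vertices vanish; the coefficients are real integers. *)
Lemma acreE v s (psi : fock C V) :
  acre Vl bl v s psi = \sum_u coef v u *: ccre (u, s) psi.
Proof.
rewrite /acre [RHS](bigID (fun u => u \in reach Vl bl v)) /= [X in _ + X]big1 ?addr0;
  last by move=> u /pathcoef_unreachable ->; rewrite scale0r.
by apply: eq_bigr => u _; rewrite conj_Creal ?realz.
Qed.

Lemma aannE v s (psi : fock C V) :
  aann Vl bl v s psi = \sum_u coef v u *: cann (u, s) psi.
Proof.
rewrite /aann [RHS](bigID (fun u => u \in reach Vl bl v)) /= [X in _ + X]big1 ?addr0 //.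
by move=> u /pathcoef_unreachable ->; rewrite scale0r.
Qed.

(* {a_{v,s}^dagger, b_{l,s}} is the clique sum of the path coefficients, hence 0. *)
Lemma anticomm_acre_bann v s l (psi : fock C V) : v \in white bl ->
  anticomm (acre Vl bl v s) (bann Vl l s) psi = 0.
Proof.
move=> vw; rewrite /anticomm !acreE /bann.
under eq_bigr do rewrite ccre_sum.
under [X in _ + X]eq_bigr do rewrite cann_sum.
under [X in _ + X]eq_bigr do under eq_bigr do rewrite cannZ.
rewrite [X in _ + X]exchange_big /= -big_split /=.
under eq_bigr do rewrite scaler_sumr -big_split /=.
under eq_bigr do under eq_bigr do rewrite -scalerDr ccre_cann_anticomm.
rewrite (eq_bigr (fun u => (if u \in Vl l then coef v u else 0) *: psi)); last first.
  move=> u _; case: (boolP (u \in Vl l)) => hu.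
    rewrite (bigD1 u) //= eqxx scale1r big1 ?addr0 // => w /andP [_ ne].
    by rewrite xpair_eqE eqxx andbT eq_sym (negbTE ne) scale0r scaler0.
  rewrite scale0r big1 // => w hw.
  rewrite (_ : (u, s) == (w, s) = false) ?scale0r ?scaler0 //.
  by rewrite xpair_eqE eqxx andbT; apply: contraNF hu => /eqP ->.
by rewrite -scaler_suml -big_mkcond /= -rmorph_sum (pathcoef_clique glued) // scale0r.
Qed.

(* {c_{u,s}^dagger, a_{v,s}} = coef v u = delta_{u,v} for white u and v. *)
Lemma anticomm_ccre_aann u v s (psi : fock C V) : u \in white bl -> v \in white bl ->
  anticomm (ccre (u, s)) (aann Vl bl v s) psi = (u == v)%:R *: psi.
Proof.
move=> uw vw; rewrite /anticomm !aannE ccre_sum.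
under eq_bigr do rewrite ccreZ.
rewrite -big_split /=.
under eq_bigr do rewrite -scalerDr ccre_cann_anticomm.
rewrite (bigD1 u) //= eqxx scale1r big1 ?addr0.
  by rewrite (pathcoef_white glued) // eq_sym; case: eqP; rewrite ?scale1r ?scale0r.
by move=> w ne; rewrite xpair_eqE eqxx andbT eq_sym (negbTE ne) scale0r scaler0.
Qed.

Lemma acre_vac_zero_mode t v s : v \in white bl ->
  single_sector s (acre Vl bl v s (vac C V)) /\ hop Vl t (acre Vl bl v s (vac C V)) = 0.
Proof.
move=> vw; rewrite acreE; split; first exact: onepart_comb_sector.
rewrite hop_onepart big1 ?scaler0 // => l _.
by rewrite -rmorph_sum (pathcoef_clique glued) // scale0r.
Qed.

Lemma acre_vac_at_white v w s : v \in white bl -> w \in white bl ->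
  acre Vl bl v s (vac C V) [set (w, s)] = (v == w)%:R.
Proof. by move=> vw ww; rewrite acreE onepart_comb_at (pathcoef_white glued) // rmorph_nat. Qed.

Lemma acre_vac_free s (k : V -> C) :
  \sum_(v in white bl) k v *: acre Vl bl v s (vac C V) = 0 ->
  forall w, w \in white bl -> k w = 0.
Proof.
move=> hk w ww; have := congr1 (fun f : fock C V => f [set (w, s)]) hk.
rewrite /= sum_ffunE ffunE (bigD1 w) //= big1 ?addr0 => [|v /andP [vw ne]].
  by rewrite ffunE acre_vac_at_white // eqxx => <-; exact: (esym (mulr1 _)).
by rewrite ffunE acre_vac_at_white // (negbTE ne); exact: mulr0.
Qed.

(* If around every vertex the clique sums of k add up to zero, then every single
   clique sum vanishes: argue downwards from the last clique, using that the black
   vertex of clique l only lies in cliques l' >= l. *)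
Lemma clique_sums_vanish (k : V -> C) :
  (forall w, \sum_(l | w \in Vl l) \sum_(u in Vl l) k u = 0) ->
  forall l, \sum_(u in Vl l) k u = 0.
Proof.
move=> hk; suff top n (l : 'I_L) : (L - n <= l)%N -> \sum_(u in Vl l) k u = 0.
  by move=> l; apply: (top L); lia.
elim: n l => [|n IH] l hl; first by have := ltn_ord l; lia.
have := hk (bl l); rewrite (bigD1 l) ?(black_in_clique glued) //=.
rewrite [X in _ + X]big1 ?addr0 // => l' /andP [hin ne].
apply: IH; have := black_before glued hin.
have ne' : (l' : nat) != l by apply: contra ne => /eqP /ord_inj ->.
lia.
Qed.

Lemma white_expansion (k : V -> C) :
  (forall l, \sum_(u in Vl l) k u = 0) ->
  forall u, \sum_(v in white bl) k v * coef v u = k u.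
Proof.
move=> hk; suff ind n u : (height bl u < n)%N -> \sum_(v in white bl) k v * coef v u = k u.
  by move=> u; exact: (ind _ u (ltnSn _)).
elim: n u => [//|n IH] u hu.
case: (boolP (u \in white bl)) => [uw|/nonwhite_black [l El]].
  rewrite (bigD1 u) //= (pathcoef_white glued) // eqxx mulr1 big1 ?addr0 // => v /andP [vw ne].
  by rewrite (pathcoef_white glued) // (negbTE ne) mulr0.
have hk_black : k u = - \sum_(w in Vl l | w != bl l) k w.
  apply/eqP; rewrite -addr_eq0 El; apply/eqP.
  by have := hk l; rewrite (bigD1 (bl l) (black_in_clique glued l)).
rewrite hk_black El.
under eq_bigr => v vw do rewrite (pathcoef_black glued l vw) rmorphN rmorph_sum mulrN mulr_sumr.
rewrite sumrN exchange_big; congr (- _); apply: eq_bigr => w /andP [hw ne].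
apply: IH; have := dedge_height glued (w := w) (u := bl l).
rewrite (dedge_to_black glued) hw ne => /(_ isT).
by move: hu; rewrite El (height_black glued); lia.
Qed.

Lemma zero_modes_span t s (psi : fock C V) : t != 0 ->
  single_sector s psi -> hop Vl t psi = 0 ->
  psi = \sum_(v in white bl) psi [set (v, s)] *: acre Vl bl v s (vac C V).
Proof.
move=> t0 sec hpsi; pose k u := psi [set (u, s)].
have psiE := sector_decomp sec.
have hk w : \sum_(l | w \in Vl l) \sum_(u in Vl l) k u = 0.
  have := congr1 (fun f : fock C V => f [set (w, s)]) hpsi.
  by rewrite /= psiE hop_onepart_at ffunE => /eqP; rewrite mulf_eq0 (negbTE t0) => /eqP.
rewrite {1}psiE.
under [RHS]eq_bigr do rewrite acreE scaler_sumr.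
rewrite [RHS]exchange_big /=; apply: eq_bigr => u _.
under eq_bigr do rewrite scalerA.
by rewrite -scaler_suml white_expansion //; exact: clique_sums_vanish.
Qed.

End ZeroModes.

Theorem mainTheorem3 (C : numClosedFieldType) (V : finType) (L : nat)
    (Vl : 'I_L -> {set V}) (bl : 'I_L -> V) (t : C) :
  glued_cliques Vl bl -> 0 < t ->
  [/\ (forall (v : V) (s : bool) (l : 'I_L) (psi : fock C V),
         v \in white bl ->
         anticomm (acre Vl bl v s) (bann Vl l s) psi = 0),
      (forall (u v : V) (s : bool) (psi : fock C V),
         u \in white bl -> v \in white bl ->
         anticomm (ccre (u, s)) (aann Vl bl v s) psi = (u == v)%:R *: psi),
      (forall s : bool,
         [/\ (forall v, v \in white bl ->
                single_sector s (acre Vl bl v s (vac C V)) /\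
                hop Vl t (acre Vl bl v s (vac C V)) = 0),
             (forall k : V -> C,
                \sum_(v in white bl) k v *: acre Vl bl v s (vac C V) = 0 ->
                forall v, v \in white bl -> k v = 0) &
             (forall psi : fock C V,
                single_sector s psi -> hop Vl t psi = 0 ->
                exists k : V -> C,
                  psi = \sum_(v in white bl) k v *: acre Vl bl v s (vac C V))])
    & #|white bl| = (#|V| - L)%N].
Proof.
move=> glued t_gt0; have t_neq0 : t != 0 by rewrite gt_eqF.
split=> [v s l psi vw|u v s psi uw vw|s|]; last exact: (white_card glued).
- exact: anticomm_acre_bann.
- exact: anticomm_ccre_aann.
split=> [v vw|k|psi sec hpsi]; first exact: acre_vac_zero_mode.
- exact: acre_vac_free.
- by exists (fun v => psi [set (v, s)]); exact: (zero_modes_span glued t_neq0 sec hpsi).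
Qed.
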